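(* If a system $C=(1,c_2,c_3,c_4,c_5,c_6)$ is canonical and its subsystem $(1,c_2,c_3,c_4,c_5)$ is noncanonical, then $c_6\ne 2c_5-c_4$.
   Context: A system is a tuple $C=(c_1,\dots,c_n)$ of integers with $1=c_1<c_2<\dots<c_n$; for $k\le n$, $(c_1,\dots,c_k)$ is a subsystem. For a positive integer $v$, $\mathrm{opt}_C(v)$ is the minimum of $\sum_i x_i$ over $x\in\mathbb{Z}_{\ge0}^n$ with $\sum_i c_ix_i=v$. The greedy representation of $v$ is produced by: for $i=n$ down to $1$, while $c_i\le$ remaining value, take a coin $c_i$. $\mathrm{grd}_C(v)$ is its number of coins. A positive integer $w$ is a counterexample if $\mathrm{opt}_C(w)<\mathrm{grd}_C(w)$; $C$ is canonical if it has none, noncanonical otherwise. *)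

From mathcomp Require Import all_boot.
Set Implicit Arguments. Unset Strict Implicit. Unset Printing Implicit Defensive.

Definition is_system (C : seq nat) : Prop :=
  head 0 C = 1 /\ sorted ltn C.

Definition rep_value (C x : seq nat) : nat :=
  \sum_(i < size C) nth 0 C i * nth 0 x i.

Definition rep_coins (x : seq nat) : nat := \sum_(i < size x) nth 0 x i.

(* Greedy: coins from the largest down; for coin c>0 the loop
   "while c <= remaining, take c" takes exactly (rem %/ c) coins. *)
Fixpoint grd_aux (cs : seq nat) (v : nat) : nat :=
  match cs with
  | [::] => 0
  | c :: cs' => v %/ c + grd_aux cs' (v %% c)
  end.

Definition grd (C : seq nat) (v : nat) : nat := grd_aux (rev C) v.

(* opt_C(w) < grd_C(w): some representation of w uses fewer coins than greedy
   (opt is the minimum over representations, so this is exactly opt < grd). *)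
Definition counterexample (C : seq nat) (w : nat) : Prop :=
  0 < w /\
  exists x : seq nat, size x = size C /\ rep_value C x = w /\
                      rep_coins x < grd C w.

Definition canonical (C : seq nat) : Prop := forall w, ~ counterexample C w.

From mathcomp Require Import all_boot zify.

(* Write d = c5 - c4, so that c6 = c5 + d.  Take a smallest counterexample w
   of C5 = (1, c2, c3, c4, c5), optimally represented by a coin a and coins of
   total value V = w - a.  Minimality of w and canonicity of C6 give c6 <= w and
   a, V < c4; and since the greedy C6-representation of w + d has as many coins
   as the greedy C5-representation of w, the coin a + d would beat greedy at
   w + d in C6, so a + d is not a coin.  Canonicity of C6 at c4 + c5 and c4 + c4
   makes c4 - d and c4 - 2d coins of C5 (or 0); as a > 2d (from c6 <= a + V),
   no coin below c4 is left for a. *)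

Fixpoint grd_coins (cs : seq nat) (v : nat) : seq nat :=
  if cs is c :: cs' then nseq (v %/ c) c ++ grd_coins cs' (v %% c) else [::].

Lemma size_grd_coins cs v : size (grd_coins cs v) = grd_aux cs v.
Proof. by elim: cs v => //= c cs IH v; rewrite size_cat size_nseq IH. Qed.

Lemma grd_coins_sub cs v : all (mem cs) (grd_coins cs v).
Proof.
elim: cs v => //= c cs IH v; rewrite all_cat all_nseq.
rewrite [X in _ || X]mem_head orbT /=.
by apply: sub_all (IH _) => y y_cs; apply/orP; right.
Qed.

Lemma grd_coins0 cs : grd_coins cs 0 = [::].
Proof. by elim: cs => //= c cs IH; rewrite div0n mod0n IH. Qed.

Lemma sumn_grd_coins cs v : 1 \in cs -> sumn (grd_coins cs v) = v.
Proof.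
elim: cs v => // c cs IH v; rewrite inE /= sumn_cat sumn_nseq.
case/orP=> [/eqP <- | /IH ->]; last by rewrite mulnC -divn_eq.
by rewrite modn1 grd_coins0 divn1 mul1n addn0.
Qed.

Lemma grd_aux_cons_ge c cs v : 0 < c -> c <= v ->
  grd_aux (c :: cs) v = (grd_aux (c :: cs) (v - c)).+1.
Proof.
move=> c_gt0 /subnK {1}<- /=.
by rewrite divnDr ?dvdnn // divnn c_gt0 modnDr addn1.
Qed.

Lemma grd_aux_cons_lt c cs v : v < c -> grd_aux (c :: cs) v = grd_aux cs v.
Proof. by move=> v_lt /=; rewrite divn_small // modn_small. Qed.

Definition coin_seq (C x : seq nat) : seq nat :=
  flatten [seq nseq (nth 0 x i) (nth 0 C i) | i <- iota 0 (size C)].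

Lemma sumn_coin_seq C x : sumn (coin_seq C x) = rep_value C x.
Proof.
rewrite /coin_seq sumn_flatten -map_comp sumnE big_map /rep_value.
rewrite -(big_mkord xpredT (fun i => nth 0 C i * nth 0 x i)) /index_iota subn0.
by apply: eq_bigr => i _; rewrite /= sumn_nseq.
Qed.

Lemma size_coin_seq C x : size x = size C -> size (coin_seq C x) = rep_coins x.
Proof.
move=> sizeE; rewrite /coin_seq size_flatten /shape -map_comp sumnE big_map.
rewrite /rep_coins sizeE -(big_mkord xpredT (nth 0 x)) /index_iota subn0.
by apply: eq_bigr => i _; rewrite /= size_nseq.
Qed.

Lemma coin_seq_sub C x : all (mem C) (coin_seq C x).
Proof.
apply/allP => y /flattenP[_ /mapP[i i_in ->] /nseqP[-> _]].
by apply: mem_nth; rewrite mem_iota in i_in.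
Qed.

Lemma sum_count_mem {C s : seq nat} (F : nat -> nat) : uniq C -> all (mem C) s ->
  \sum_(c <- C) F c * count_mem c s = \sum_(y <- s) F y.
Proof.
move=> C_uniq; elim: s => [|y s IH] /=.
  by rewrite big_nil big1 // => c _; rewrite muln0.
case/andP=> y_C s_C; rewrite big_cons -IH //.
under eq_bigr => c _ do rewrite mulnDr.
rewrite big_split /= (bigD1_seq y) //= eqxx muln1 big1 ?addn0 // => c c_neq_y.
by rewrite eq_sym (negbTE c_neq_y) muln0.
Qed.

Lemma rep_value_count C s : uniq C -> all (mem C) s ->
  rep_value C [seq count_mem c s | c <- C] = sumn s.
Proof.
move=> C_uniq s_C; rewrite sumnE -(sum_count_mem (fun c => c) C_uniq s_C).
rewrite (big_nth 0) big_mkord; apply: eq_bigr => i _.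
by rewrite (nth_map 0).
Qed.

Lemma rep_coins_count (C s : seq nat) : uniq C -> all (mem C) s ->
  rep_coins [seq count_mem c s | c <- C] = size s.
Proof.
move=> C_uniq s_C; rewrite -sum1_size -(sum_count_mem (fun=> 1) C_uniq s_C).
rewrite /rep_coins size_map (big_nth 0) big_mkord; apply: eq_bigr => i _.
by rewrite (nth_map 0) // mul1n.
Qed.

Definition grd_optimal (C : seq nat) (v : nat) : Prop :=
  forall s, all (mem C) s -> sumn s = v -> grd C v <= size s.

Lemma grd0 C : grd C 0 = 0.
Proof. by rewrite /grd -size_grd_coins grd_coins0. Qed.

Lemma canonicalP C : uniq C -> canonical C <-> forall v, grd_optimal C v.
Proof.
move=> C_uniq; split=> [canC _ s s_C <- | optC w [_ [x [sizeE [<- lt_grd]]]]].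
  rewrite leqNgt; apply/negP => lt_grd; apply: (canC (sumn s)); split.
    by case: (posnP (sumn s)) lt_grd => // ->; rewrite grd0.
  exists [seq count_mem c s | c <- C].
  by rewrite size_map rep_value_count // rep_coins_count.
have := optC _ _ (coin_seq_sub C x) (sumn_coin_seq C x).
by rewrite size_coin_seq // leqNgt lt_grd.
Qed.

Lemma grd_rep C v : 1 \in C ->
  exists s, [/\ all (mem C) s, sumn s = v & size s = grd C v].
Proof.
move=> C1; exists (grd_coins (rev C) v); split; last exact: size_grd_coins.
  by apply: sub_all (grd_coins_sub _ _) => y; rewrite /= mem_rev.
by rewrite sumn_grd_coins // mem_rev.
Qed.

Lemma grd_optimal_sub {C v b} : 1 \in C -> grd_optimal C v -> b \in C -> b <= v ->
  grd C v <= (grd C (v - b)).+1.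
Proof.
move=> C1 opt_v b_C b_le; have [s [s_C sumE <-]] := grd_rep C (v - b) C1.
by apply: (opt_v (b :: s)); rewrite /= ?b_C ?sumE ?subnKC.
Qed.

Lemma grd_le1 {C v} : 1 \in C -> grd C v <= 1 -> v = 0 \/ v \in C.
Proof.
move=> C1; have [s [s_C <- <-]] := grd_rep C v C1.
case: s s_C => [|y [|z s]] //= s_C _; first by left.
by right; rewrite addn0; case/andP: s_C.
Qed.

Section ShiftedTopCoin.

Variables c2 c3 c4 c5 : nat.
Hypotheses (c2_gt1 : 1 < c2) (lt_c23 : c2 < c3) (lt_c34 : c3 < c4) (lt_c45 : c4 < c5).

Local Notation c6 := (2 * c5 - c4).
Local Notation d := (c5 - c4).
Local Notation C5 := [:: 1; c2; c3; c4; c5].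
Local Notation C6 := [:: 1; c2; c3; c4; c5; c6].

Lemma grd5E v : grd C5 v = grd_aux [:: c5; c4; c3; c2; 1] v.
Proof. by []. Qed.

Lemma grd6E v : grd C6 v = grd_aux [:: c6; c5; c4; c3; c2; 1] v.
Proof. by []. Qed.

Lemma grd5_ge v : c5 <= v -> grd C5 v = (grd C5 (v - c5)).+1.
Proof. by move=> le_v; rewrite !grd5E grd_aux_cons_ge //; lia. Qed.

Lemma grd5_mid v : c4 <= v < c5 -> grd C5 v = (grd C5 (v - c4)).+1.
Proof.
case/andP=> le_v lt_v; have lt_v4 : v - c4 < c5 by lia.
rewrite !grd5E (grd_aux_cons_lt _ _ _ lt_v) (grd_aux_cons_lt _ _ _ lt_v4).
by rewrite grd_aux_cons_ge //; lia.
Qed.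

Lemma grd6_lt {v} : v < c6 -> grd C6 v = grd C5 v.
Proof. by move=> lt_v; rewrite grd6E grd5E grd_aux_cons_lt. Qed.

Lemma grd6_ge v : c6 <= v -> grd C6 v = (grd C6 (v - c6)).+1.
Proof. by move=> le_v; rewrite !grd6E grd_aux_cons_ge //; lia. Qed.

(* As c6 - c5 = c5 - c4 = d, adding d to v trades the first top coin (c4 or c5)
   of its greedy representation for the next larger one. *)
Lemma grd6_shift v : c4 <= v < c5 + c6 -> grd C6 (v + d) = grd C5 v.
Proof.
case/andP=> le_v lt_v; have [lt_v5 | le_v5] := ltnP v c5.
  rewrite grd6_lt; last by lia.
  rewrite grd5_ge; last by lia.
  rewrite (grd5_mid v); last by lia.
  by have -> : v + d - c5 = v - c4 by lia.
rewrite grd6_ge; last by lia.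
rewrite grd6_lt; last by lia.
rewrite (grd5_ge v) //.
by have -> : v + d - c6 = v - c5 by lia.
Qed.

Hypothesis C6_canonical : canonical C6.

Lemma grd6_optimal v : grd_optimal C6 v.
Proof.
apply: (canonicalP C6 _).1 C6_canonical v.
by rewrite /= !inE; lia.
Qed.

Lemma pair_excess_coin {b} : b \in C6 -> c6 <= c4 + b < c6 + c6 ->
  c4 + b - c6 = 0 \/ c4 + b - c6 \in C5.
Proof.
move=> b_C6 /andP[le_b lt_b]; apply: grd_le1 => //.
have := grd6_optimal (c4 + b) [:: c4; b].
rewrite /= b_C6 !inE eqxx !orbT addn0 => /(_ isT erefl).
by rewrite grd6_ge // grd6_lt //; lia.
Qed.

Section MinimalCounterexample.

Context {w a : nat} {t : seq nat}.
Hypothesis optimal_below : forall u, u < w -> grd_optimal C5 u.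
Hypothesis a_coin : a \in C5.
Hypothesis t_coins : all (mem C5) t.
Hypothesis w_split : w = a + sumn t.
Hypothesis grd_w_gt : (size t).+1 < grd C5 w.

Local Notation V := (sumn t).
Local Notation S := (size t).

Let a_bounds : 0 < a <= c5.
Proof. by move: a_coin; rewrite !inE; lia. Qed.

Let a_coin6 : a \in C6.
Proof. by move: a_coin; rewrite !inE; lia. Qed.

Lemma grd5_rest_le : grd C5 V <= S.
Proof. by apply: (optimal_below V _ t t_coins erefl); lia. Qed.

Lemma grd6_add_le {b} : b \in C6 -> grd C6 (b + V) <= S.+1.
Proof.
move=> b_C6; apply: (grd6_optimal _ (b :: t) _ erefl); rewrite /= b_C6.
by apply: sub_all t_coins => y; rewrite /= !inE; lia.
Qed.

Lemma a_neq_c5 : a != c5.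
Proof.
apply/eqP=> a5; move: grd_w_gt; rewrite grd5_ge; last by lia.
have -> : w - c5 = V by lia.
by have := grd5_rest_le; lia.
Qed.

Lemma c6_le_w : c6 <= w.
Proof.
rewrite leqNgt; apply/negP=> lt_w; move: grd_w_gt.
rewrite -(grd6_lt lt_w) w_split.
by have := grd6_add_le a_coin6; lia.
Qed.

Lemma V_lt_c5 : V < c5.
Proof.
rewrite ltnNge; apply/negP=> le_V; move: grd_w_gt; rewrite grd5_ge; last by lia.
have lt_w : w - c5 < w by lia.
have := grd_optimal_sub (isT : 1 \in C5) (optimal_below _ lt_w) a_coin.
have -> : w - c5 - a = V - c5 by lia.
by have := grd5_rest_le; rewrite grd5_ge //; lia.
Qed.

Lemma grd6_w_shift : grd C6 (w + d) = grd C5 w.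
Proof. by rewrite grd6_shift //; have := c6_le_w; have := V_lt_c5; lia. Qed.

Lemma shift_neq_coin {b} : b \in C6 -> a + d != b.
Proof.
move=> b_C6; apply/eqP=> shiftE; have := grd6_add_le b_C6.
have -> : b + V = w + d by lia.
by rewrite grd6_w_shift; lia.
Qed.

Lemma V_lt_c4 : V < c4.
Proof.
rewrite ltnNge; apply/negP=> le_V.
have := grd_optimal_sub (isT : 1 \in C6) (grd6_optimal (w + d)) a_coin6.
have -> : w + d - a = V + d by lia.
rewrite grd6_w_shift (grd6_shift V); last by have := V_lt_c5; lia.
by have := grd5_rest_le; lia.
Qed.

Lemma minimal_counterexample_absurd : False.
Proof.
have c4_C6 : c4 \in C6 by rewrite !inE eqxx !orbT.
have c5_C6 : c5 \in C6 by rewrite !inE eqxx !orbT.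
have a_lt_c4 : a < c4.
  by have := shift_neq_coin c5_C6; have := a_neq_c5; move: a_coin; rewrite !inE; lia.
have lt_2d : 2 * d < a by have := c6_le_w; have := V_lt_c4; lia.
(* c4 + c5 - c6 = c4 - d and c4 + c4 - c6 = c4 - 2 d *)
have e_range : c6 <= c4 + c5 < c6 + c6 by lia.
have f_range : c6 <= c4 + c4 < c6 + c6 by lia.
have [e0 | e_C5] := pair_excess_coin c5_C6 e_range; first by lia.
have [f0 | f_C5] := pair_excess_coin c4_C6 f_range; first by lia.
have e_C6 : c4 + c5 - c6 \in C6 by move: e_C5; rewrite !inE; lia.
have a_ne_e := shift_neq_coin c4_C6; have a_ne_f := shift_neq_coin e_C6.
have f_ge : c2 <= c4 + c4 - c6 by move: f_C5; rewrite !inE; lia.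
have e_c3 : c4 + c5 - c6 = c3 by move: e_C5; rewrite !inE; lia.
have f_c2 : c4 + c4 - c6 = c2 by move: f_C5; rewrite !inE; lia.
by move: a_coin; rewrite !inE; lia.
Qed.

End MinimalCounterexample.

Lemma grd5_optimal w : grd_optimal C5 w.
Proof.
elim/ltn_ind: w => w IH [|a t] /=; first by move=> _ <-; rewrite grd0.
case/andP=> a_coin t_coins w_split; rewrite leqNgt; apply/negP=> grd_w_gt.
exact: (minimal_counterexample_absurd IH a_coin t_coins (esym w_split) grd_w_gt).
Qed.

Lemma canonical5 : canonical C5.
Proof.
apply/(canonicalP C5 _).2; first by rewrite /= !inE; lia.
exact: grd5_optimal.
Qed.

End ShiftedTopCoin.

Theorem lemma6 (c2 c3 c4 c5 c6 : nat) :
  is_system [:: 1; c2; c3; c4; c5; c6] ->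
  canonical [:: 1; c2; c3; c4; c5; c6] ->
  ~ canonical [:: 1; c2; c3; c4; c5] ->
  c6 <> 2 * c5 - c4.
Proof.
move=> [_ /= /and5P[lt12 lt23 lt34 lt45 _]] can6 noncan5 c6E; apply: noncan5.
by rewrite c6E in can6; apply: canonical5.
Qed.
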